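(* Let $I,S\ge 0$ and $j$ be integers with $L(I,S)\le j\le\lfloor I/2\rfloor$, and consider the pairing process described in the context. Let $B$ be a set of $j$ bb-pairings that is the set of bb-pairings of some possible wiring. The number of possible wirings whose set of bb-pairings is exactly $B$ equals $S!$ if $(I,S,j)$ is in the dagger case, and equals the number of ordered selections (dispositions) of $I-2j$ distinct elements from a set of $S$ elements, namely $\frac{S!}{(S-I+2j)!}$, otherwise.
   Context: Pairing process: there are $I$ infected devices $b_1,\dots,b_I$ and $S$ clean devices $w_1,\dots,w_S$. For $t=1,\dots,I$ in this order: if $b_t$ is not yet paired and at least one device other than $b_t$ is not yet paired, then $b_t$ chooses one of the currently unpaired devices other than itself uniformly at random, independently of previous choices, and becomes paired with it; otherwise $b_t$ does nothing. Each device belongs to at most one pair. The wiring is the final set of pairs; a bb-pairing is a pair consisting of two infected devices; a wiring is possible if it occurs with positive probability. $L(I,S)=0$ if $I\le S$; $L(I,S)=\frac{I-S}{2}$ if $I>S$ and $I-S$ is even; $L(I,S)=\frac{I-S-1}{2}$ if $I>S$ and $I-S$ is odd. $(I,S,j)$ is in the dagger case if $I>S$, $I+S$ is odd and $j=\frac{I-S-1}{2}$. *)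

From HB Require Import structures.
From mathcomp Require Import all_boot all_order all_algebra.
Set Implicit Arguments. Unset Strict Implicit. Unset Printing Implicit Defensive.
Import GRing.Theory Num.Theory.

(* Devices: inl t = infected device b_(t+1) (t : 'I_I),
            inr s = clean device w_(s+1) (s : 'I_S). *)
Definition device (I S : nat) : finType := ('I_I + 'I_S)%type.

(* A pair is a 2-element set of devices; a (partial) wiring is a set of pairs. *)
Definition wiring (I S : nat) := {set {set device I S}}.

Definition paired I S (M : wiring I S) : {set device I S} := cover M.

Definition avail I S (M : wiring I S) (x : device I S) : {set device I S} :=
  [set y | (y != x) && (y \notin paired M)].

(* prob ts M W = probability that, starting from the partial wiring M and
   letting the infected devices b_t for t in ts act in this order, the final
   wiring is W. *)
Fixpoint prob I S (ts : seq 'I_I) (M : wiring I S) (W : wiring I S) : rat :=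
  match ts with
  | [::] => (M == W)%:R%R
  | t :: ts' =>
      let x : device I S := inl t in
      let A := avail M x in
      if (x \notin paired M) && (A != set0) then
        (\sum_(y in A) ((#|A|%:R)^-1 * prob ts' (M :|: [set [set x; y]]) W)%R)%R
      else prob ts' M W
  end.

Definition wiring_prob I S (W : wiring I S) : rat := prob (enum 'I_I) set0 W.

Definition possible I S (W : wiring I S) : bool := (0 < wiring_prob W)%R.


Definition is_infected I S (x : device I S) : bool :=
  if x is inl _ then true else false.

Definition bb_pairings I S (W : wiring I S) : wiring I S :=
  [set p in W | [forall x in p, is_infected x]].

Definition L (I S : nat) : nat :=
  if I <= S then 0
  else if ~~ odd (I - S) then (I - S) %/ 2 else (I - S - 1) %/ 2.

Definition dagger (I S j : nat) : bool :=
  [&& S < I, odd (I + S) & j == (I - S - 1) %/ 2].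

From HB Require Import structures.
From mathcomp Require Import all_boot all_order all_algebra.
From mathcomp Require Import zify.
Set Implicit Arguments. Unset Strict Implicit. Unset Printing Implicit Defensive.
Import Order.TTheory GRing.Theory Num.Theory.

(* A wiring is possible iff it is [reachable]: every pair {b_a, y} has as its
   least infected member the device b_a that chose it, pairs are disjoint, and
   every infected device is paired or was left alone, i.e. all other devices
   are paired and no pair was created after its turn.  This is proved turn by
   turn, tracking the pairs created before turn k.
   Given the bb-pairings B, every other pair of a possible wiring links one of
   the I - 2j infected devices outside B to its own clean device.  A device
   left alone forces all S clean devices to be linked, so when I - 2j <= S
   every one of them is linked, and each injection into the clean devices
   gives a possible wiring: S!/(S - I + 2j)! wirings.  When I - 2j = S + 1 some
   device is left alone, and it must be the last of them (all earlier ones are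
   paired before its turn), so the remaining S are matched bijectively: S!
   wirings. *)

Section Pairing.
Variables I S : nat.
Local Notation dev := (device I S).
Local Notation wir := (wiring I S).
Local Notation ib t := (@inl 'I_I 'I_S t).

Lemma prob_ge0 ts (M W : wir) : (0 <= prob ts M W)%R.
Proof.
elim: ts M => [|t ts IH] M /=; first by case: (M == W).
case: ifP => _ //; apply: sumr_ge0 => y _; apply: mulr_ge0 => //.
by rewrite invr_ge0 ler0n.
Qed.

Lemma prob_cons_gt0 t ts (M W : wir) :
  (0 < prob (t :: ts) M W)%R <->
  (if (ib t \notin paired M) && (avail M (ib t) != set0) then
     exists2 y, y \in avail M (ib t) & (0 < prob ts (M :|: [set [set ib t; y]]) W)%R
   else (0 < prob ts M W)%R).
Proof.
rewrite /=; case: ifP => [/andP[_ nzA] | _] //.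
set A := avail M (ib t).
have invA_gt0 : (0 < #|A|%:R^-1 :> rat)%R.
  by rewrite invr_gt0 ltr0n lt0n cards_eq0.
have term_ge0 y : (0 <= #|A|%:R^-1 * prob ts (M :|: [set [set ib t; y]]) W)%R.
  by rewrite mulr_ge0 ?prob_ge0 // ltW.
rewrite lt_def psumr_neq0 // sumr_ge0 // andbT; split.
- case/hasP=> y _ /andP[yA nz]; exists y => //.
  by rewrite -(pmulr_rgt0 _ invA_gt0).
- case=> y yA ppos; apply/hasP; exists y; first exact: mem_index_enum.
  by rewrite yA pmulr_rgt0.
Qed.

Lemma pairedP (M : wir) (x : dev) :
  reflect (exists2 p, p \in M & x \in p) (x \in paired M).
Proof. by apply: (iffP bigcupP) => -[p pM xp]; exists p. Qed.

(* A pair {b_a, y} was created when b_a chose y, so b_a is its least infected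
   member. *)
Definition initiated k (M : wir) := forall p, p \in M -> exists (a : 'I_I) (y : dev),
  [/\ a < k, p = [set ib a; y], y != ib a & forall c, y = ib c -> a < c].

Definition disjoint_pairs (M : wir) :=
  forall p q (x : dev), p \in M -> q \in M -> x \in p -> x \in q -> p = q.

(* An infected device that ends unpaired found no device to choose, so every
   other device was already paired, and no pair was created after its turn. *)
Definition left_alone (M : wir) (a : 'I_I) :=
  (forall y : dev, y != ib a -> y \in paired M) /\
  forall p, p \in M -> exists2 c : 'I_I, c < a & ib c \in p.

Definition acted k (M : wir) :=
  forall a : 'I_I, a < k -> ib a \in paired M \/ left_alone M a.

Definition reachable k (M : wir) := [/\ initiated k M, disjoint_pairs M & acted k M].

Definition pairs_before (W : wir) k : wir :=
  [set p in W | [exists c : 'I_I, (c < k) && (ib c \in p)]].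

Lemma pairs_before_sub W k : pairs_before W k \subset W.
Proof. by apply/subsetP => p; rewrite inE => /andP[]. Qed.

Lemma pairs_before_id k M : initiated k M -> pairs_before M k = M.
Proof.
move=> iniM; apply/setP => p; rewrite inE andb_idr // => pM.
have [a [y [ak -> _ _]]] := iniM p pM.
by apply/existsP; exists a; rewrite ak !inE eqxx.
Qed.

Lemma pairs_before_le W k k' : k <= k' ->
  pairs_before (pairs_before W k') k = pairs_before W k.
Proof.
move=> le_kk'; apply/setP => p; rewrite !inE -andbA; congr (_ && _).
apply: andb_idl => /existsP[c /andP[ck cp]].
by apply/existsP; exists c; rewrite cp (leq_trans ck).
Qed.

Lemma pairs_beforeS W (t : 'I_I) :
  pairs_before W t.+1 = pairs_before W t :|: [set p in W | ib t \in p].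
Proof.
apply/setP => p; rewrite !inE -andb_orr; congr (_ && _); apply/existsP/orP.
- case=> c /andP[]; rewrite ltnS leq_eqVlt => /orP[/eqP/val_inj-> -> | ct cp]; first by right.
  by left; apply/existsP; exists c; rewrite ct.
- case=> [/existsP[c /andP[ct cp]] | tp]; [exists c | exists t]; rewrite ?ltnS ?leqnn //.
  by rewrite cp ltnW.
Qed.

Lemma initiated_le k k' M : k <= k' -> initiated k M -> initiated k' M.
Proof.
move=> le_kk' iniM p pM; have [a [y [ak pE ya yc]]] := iniM p pM.
by exists a, y; split=> //; apply: leq_trans le_kk'.
Qed.

Lemma acted_paired k M (t c : 'I_I) : acted k M -> ib t \notin paired M ->
  c < k -> c != t -> ib c \in paired M.
Proof.
move=> actM tM ck ct; case: (actM c ck) => // -[all_paired _].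
by rewrite all_paired ?inE // in tM; apply: contra ct => /eqP[->].
Qed.

Lemma reachable_skip M (t : 'I_I) : reachable t M ->
  ~~ ((ib t \notin paired M) && (avail M (ib t) != set0)) -> reachable t.+1 M.
Proof.
move=> [iniM disjM actM] stuck; split=> //; first exact: initiated_le iniM.
move=> a; rewrite ltnS leq_eqVlt => /orP[/eqP/val_inj-> | at_]; last exact: actM.
case/nandP: stuck => [/negPn|/negPn/eqP availE]; first by left.
right; split=> [y yt | p pM].
  by apply: contraT => yM; move/setP/(_ y): availE; rewrite !inE yt yM.
have [c [z [ct -> _ _]]] := iniM p pM.
by exists c; rewrite ?inE ?eqxx.
Qed.

Lemma reachable_add M (t : 'I_I) (y : dev) : reachable t M ->
  ib t \notin paired M -> y \in avail M (ib t) ->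
  reachable t.+1 (M :|: [set [set ib t; y]]).
Proof.
move=> [iniM disjM actM] tM; rewrite inE => /andP[yt yM].
have new_unpaired x : x \in [set ib t; y] -> x \notin paired M.
  by rewrite !inE => /orP[]/eqP->.
split.
- move=> p; rewrite !inE => /orP[pM | /eqP->].
    exact: initiated_le (leqnSn t) iniM p pM.
  exists t, y; split=> // c yE; rewrite ltnNge leq_eqVlt; apply/negP => /orP[/eqP/val_inj ct|ct].
    by rewrite yE ct eqxx in yt.
  by rewrite yE (acted_paired actM tM ct (negbT (ltn_eqF ct))) in yM.
- move=> p q x; rewrite !inE => /orP[pM|/eqP->] /orP[qM|/eqP->] xp xq //.
  + exact: disjM pM qM xp xq.
  + by case/negP: (new_unpaired x xq); apply/pairedP; exists p.
  + by case/negP: (new_unpaired x xp); apply/pairedP; exists q.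
- move=> a; rewrite ltnS leq_eqVlt => /orP[/eqP/val_inj-> | at_]; left; apply/pairedP.
    by exists [set ib t; y]; rewrite !inE ?eqxx ?orbT.
  have /pairedP[p pM ap] := acted_paired actM tM at_ (negbT (ltn_eqF at_)).
  by exists p; rewrite // inE pM.
Qed.

Lemma pairs_before_add W M (t : 'I_I) (y : dev) : reachable t M ->
  ib t \notin paired M -> y \in avail M (ib t) ->
  pairs_before W t.+1 = M :|: [set [set ib t; y]] -> pairs_before W t = M.
Proof.
move=> [iniM _ actM] tM; rewrite inE => /andP[yt yM] WE.
have no_earlier (c : 'I_I) : c < t -> ib c \notin [set ib t; y].
  move=> ct; rewrite !inE negb_or; apply/andP; split.
    by apply: contraTneq ct => -[->]; rewrite ltnn.
  by apply: contraNneq yM => <-; exact: acted_paired actM tM ct (negbT (ltn_eqF ct)).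
have new_pair_later : [exists c : 'I_I, (c < t) && (ib c \in [set ib t; y])] = false.
  by apply/existsP => -[c /andP[/no_earlier/negP]].
rewrite -(pairs_before_le W (leqnSn t)) WE -[RHS](pairs_before_id iniM).
apply/setP => p; rewrite !inE andb_orl.
by have [->|_] := eqVneq p [set ib t; y]; rewrite ?new_pair_later ?andbF ?orbF.
Qed.

Lemma pairs_beforeS_add W M (t : 'I_I) : reachable I W -> pairs_before W t = M ->
  ib t \notin paired M -> avail M (ib t) != set0 ->
  exists2 y, y \in avail M (ib t) & pairs_before W t.+1 = M :|: [set [set ib t; y]].
Proof.
move=> [iniW disjW actW] WE tM /set0Pn[z zA].
have MW : M \subset W by rewrite -WE pairs_before_sub.
case: (actW t (ltn_ord t)) => [/pairedP[p pW tp] | [all_paired earlier]]; last first.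
  have WM : W = M.
    rewrite -WE; apply/setP => p; rewrite inE andb_idr // => pW.
    by have [c ct cp] := earlier p pW; apply/existsP; exists c; rewrite ct.
  by move: zA; rewrite inE -WM => /andP[/all_paired->].
have pM : p \notin M by apply: contra tM => pM; apply/pairedP; exists p.
have [a [y [_ pE ya yc]]] := iniW p pW.
have ta : t <= a.
  rewrite leqNgt; apply: contra pM => at_; rewrite -WE inE pW; apply/existsP.
  by exists a; rewrite at_ pE !inE eqxx.
have at_ : a = t.
  move: tp; rewrite pE !inE => /orP[/eqP[]//|/eqP yt].
  by have := yc t (esym yt); rewrite ltnNge ta.
subst a; exists y.
  rewrite inE ya; apply: contra pM => /pairedP[q qM yq].
  by rewrite (disjW p q y pW (subsetP MW q qM)) // pE !inE eqxx orbT.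
rewrite pairs_beforeS WE; congr (_ :|: _); apply/setP => q; rewrite !inE.
apply/andP/eqP => [[qW tq]|->]; last by rewrite -pE.
by rewrite -pE; exact: disjW qW pW tq tp.
Qed.

Lemma pairs_beforeS_skip W M (t : 'I_I) : reachable I W -> pairs_before W t = M ->
  ~~ ((ib t \notin paired M) && (avail M (ib t) != set0)) -> pairs_before W t.+1 = M.
Proof.
move=> [iniW disjW _] WE stuck.
have MW : M \subset W by rewrite -WE pairs_before_sub.
rewrite pairs_beforeS WE; apply/setUidPl/subsetP => p; rewrite inE => /andP[pW tp].
case/nandP: stuck => [/negPn/pairedP[q qM tq] | /negPn/eqP availE].
  by rewrite (disjW p q _ pW (subsetP MW q qM) tp tq).
have [z zp zt] : exists2 z, z \in p & z != ib t.
  have [a [y [_ pE ya _]]] := iniW p pW.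
  move: tp; rewrite pE !inE => /orP[]/eqP tE; [exists y | exists (ib a)];
    by rewrite ?inE ?eqxx ?orbT // tE // eq_sym.
have /pairedP[q qM zq] : z \in paired M.
  by apply: contraT => zM; move/setP/(_ z): availE; rewrite !inE zt zM.
by rewrite (disjW p q z pW (subsetP MW q qM) zp zq).
Qed.

Lemma drop_enum_ord (t : 'I_I) : drop t (enum 'I_I) = t :: drop t.+1 (enum 'I_I).
Proof. by rewrite (drop_nth t) ?size_enum_ord // nth_ord_enum. Qed.

Lemma prob_suffix_gt0 k M W : k <= I -> reachable k M ->
  (0 < prob (drop k (enum 'I_I)) M W)%R <-> reachable I W /\ pairs_before W k = M.
Proof.
move=> kI; move nE: (I - k) => n; elim: n k kI M nE => [|n IH] k kI M nE reachM.
  have kE : k = I by lia.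
  rewrite kE in reachM *; rewrite drop_oversize ?size_enum_ord //= ltr0n lt0b.
  split=> [/eqP<-|[reachW <-]].
    by split=> //; apply: pairs_before_id; case: reachM.
  by rewrite pairs_before_id ?eqxx //; case: reachW.
have kI' : k < I by lia.
have nE' : I - k.+1 = n by lia.
have [t tk] : {t : 'I_I | val t = k} by exists (Ordinal kI').
subst k; rewrite drop_enum_ord prob_cons_gt0; case: ifPn => [/andP[tM availM] | stuck].
- split=> [[y yA /(IH _ kI' _ nE' (reachable_add reachM tM yA))] | [reachW WE]].
    by case=> reachW WE; split=> //; apply: pairs_before_add reachM tM yA WE.
  have [y yA WE'] := pairs_beforeS_add reachW WE tM availM.
  by exists y => //; apply/(IH _ kI' _ nE' (reachable_add reachM tM yA)).
- rewrite (IH _ kI' _ nE' (reachable_skip reachM stuck)).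
  split=> -[reachW WE]; split=> //; last exact: pairs_beforeS_skip reachW WE stuck.
  by rewrite -(pairs_before_le W (leqnSn t)) WE pairs_before_id //; case: reachM.
Qed.

Lemma possible_reachable (W : wir) : possible W <-> reachable I W.
Proof.
have reach0 : reachable 0 (set0 : wir) by split=> [p|p q x|a]; rewrite ?inE.
rewrite /possible /wiring_prob -(drop0 (enum 'I_I)) (prob_suffix_gt0 W (leq0n I) reach0).
split=> [[]//|reachW]; split=> //; apply/setP => p; rewrite !inE.
by case: existsP => [[c /andP[]]|]; rewrite ?andbF.
Qed.

Local Notation link a s := ([set ib a; inr s] : {set dev}).

Lemma link_inj a a' s s' : link a s = link a' s' -> a = a' /\ s = s'.
Proof.
move=> e; have /set2P[[->]|//] : ib a \in link a' s' by rewrite -e !inE eqxx.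
by have /set2P[//|[->]] : (inr s : dev) \in link a' s' by rewrite -e !inE eqxx orbT.
Qed.

Lemma links_disjoint W a a' s s' : disjoint_pairs W ->
  link a s \in W -> link a' s' \in W -> a = a' \/ s = s' -> a = a' /\ s = s'.
Proof.
move=> disjW las la's' e; apply: link_inj; case: e => [aE|sE].
  by apply: (disjW _ _ (ib a) las la's'); rewrite !inE ?aE eqxx.
by apply: (disjW _ _ (inr s) las la's'); rewrite !inE ?sE eqxx orbT.
Qed.

Section Counting.
Variables B W0 : wir.
Hypotheses (reachW0 : reachable I W0) (bbW0 : bb_pairings W0 = B).

Lemma bb_sub : B \subset W0.
Proof. by rewrite -bbW0; apply/subsetP => p; rewrite inE => /andP[]. Qed.

Lemma bb_infected p (x : dev) : p \in B -> x \in p -> is_infected x.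
Proof. by rewrite -bbW0 inE => /andP[_ /forall_inP]; apply. Qed.

Lemma link_notin_bb a s : link a s \notin B.
Proof. by apply/negP => /(@bb_infected _ (inr s)); rewrite !inE eqxx orbT => /(_ isT). Qed.

Lemma card_bb_pair p : p \in B -> #|p| = 2.
Proof.
move=> pB; have [iniW0 _ _] := reachW0.
by have [a [y [_ -> ya _]]] := iniW0 p (subsetP bb_sub p pB); rewrite cards2 eq_sym ya.
Qed.

Definition free_infected : {set 'I_I} := [set a | ib a \notin cover B].

Lemma card_free_infected : #|free_infected| = I - 2 * #|B|.
Proof.
have [_ disjW0 _] := reachW0.
have trivB : trivIset B.
  apply/trivIsetP => p q pB qB; apply: contraNT; rewrite -setI_eq0 => /set0Pn[x].
  rewrite inE => /andP[xp xq]; apply/eqP.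
  exact: disjW0 (subsetP bb_sub p pB) (subsetP bb_sub q qB) xp xq.
have card_cover : #|cover B| = 2 * #|B|.
  rewrite -(eqP trivB) (eq_bigr (fun=> 2)) => [|p /card_bb_pair //].
  by rewrite sum_nat_const mulnC.
have coverE : cover B = [set ib a | a in ~: free_infected].
  apply/setP => x; apply/idP/imsetP => [xB|[a]]; last by rewrite !inE negbK => ? ->.
  case: x xB => [a|s] xB; first by exists a; rewrite ?inE ?negbK.
  by case/bigcupP: xB => p pB sp; have := bb_infected pB sp.
by rewrite cardsCs card_ord -card_cover coverE card_imset // => a b [].
Qed.

Lemma pair_bb_or_link W p : reachable I W -> bb_pairings W = B -> p \in W ->
  p \in B \/ exists a s, p = link a s.
Proof.
case=> iniW _ _ bbW pW; have [a [y [_ pE _ _]]] := iniW p pW.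
case: y pE => [c|s] pE; last by right; exists a, s.
by left; rewrite -bbW inE pW; apply/forall_inP => x; rewrite pE !inE => /orP[]/eqP->.
Qed.

Lemma link_free W a s : reachable I W -> bb_pairings W = B ->
  link a s \in W -> a \in free_infected.
Proof.
case=> _ disjW _ bbW linkW; rewrite inE; apply/bigcupP => -[q qB aq].
have qW : q \in W by move: qB; rewrite -bbW inE => /andP[].
by have := link_notin_bb a s; rewrite (disjW _ q (ib a) linkW qW) ?qB // !inE eqxx.
Qed.

Lemma free_paired_link W a : reachable I W -> bb_pairings W = B ->
  a \in free_infected -> ib a \in paired W -> exists s, link a s \in W.
Proof.
move=> reachW bbW; rewrite inE => aB /pairedP[p pW ap].
case: (pair_bb_or_link reachW bbW pW) => [pB | [a' [s pE]]].
  by case/negP: aB; apply/bigcupP; exists p.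
by exists s; move: ap; rewrite pE !inE => /orP[/eqP[aE]|/eqP//]; rewrite aE -pE.
Qed.

Section Extension.
Variable D : {set 'I_I}.
Hypothesis D_free : D \subset free_infected.
Local Notation dom := {a : 'I_I | a \in D}.

Definition extend (f : {ffun dom -> 'I_S}) : wir :=
  B :|: [set link (val x) (f x) | x : dom].

Lemma extendP (f : {ffun dom -> 'I_S}) p :
  reflect (p \in B \/ exists x, p = link (val x) (f x)) (p \in extend f).
Proof.
rewrite inE; apply: (iffP orP) => -[pB | pX]; try by left.
  by right; case/imsetP: pX => x _ ->; exists x.
by right; case: pX => x ->; apply/imsetP; exists x.
Qed.

Lemma extend_inj : injective extend.
Proof.
move=> f g fg; apply/ffunP => x.
have /extendP[|[x' /link_inj[/val_inj <- //]]] : link (val x) (f x) \in extend g.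
  by rewrite -fg; apply/extendP; right; exists x.
by rewrite (negbTE (link_notin_bb _ _)).
Qed.

Lemma reachable_extend (f : {ffun dom -> 'I_S}) : injective f ->
  (forall a, a \in free_infected :\: D -> left_alone (extend f) a) ->
  reachable I (extend f) /\ bb_pairings (extend f) = B.
Proof.
move=> f_inj alone; have [iniW0 disjW0 _] := reachW0.
have inW0 p : p \in B -> p \in W0 := subsetP bb_sub p.
have bb_link_disjoint p x (y : dev) : p \in B -> y \in p -> y \in link (val x) (f x) -> False.
  move=> pB yp; rewrite !inE => /orP[]/eqP yE; last by have := bb_infected pB yp; rewrite yE.
  have := subsetP D_free _ (valP x); rewrite inE => /negP; apply; apply/bigcupP.
  by exists p; rewrite -?yE.
split; first split.
- move=> p /extendP[pB|[x ->]]; first exact: iniW0 _ (inW0 p pB).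
  by exists (val x), (inr (f x)).
- move=> p q y /extendP[pB|[x ->]] /extendP[qB|[x' ->]] yp yq.
  + exact: disjW0 (inW0 p pB) (inW0 q qB) yp yq.
  + by case: (bb_link_disjoint _ _ _ pB yp yq).
  + by case: (bb_link_disjoint _ _ _ qB yq yp).
  + move: yp yq; rewrite !inE => /orP[]/eqP-> /orP[]/eqP// [e].
      by rewrite (_ : x = x') //; apply: val_inj.
    by rewrite (f_inj _ _ e).
- move=> a _; have [aB|aF] := boolP (ib a \in cover B).
    by left; case/bigcupP: aB => p pB ap; apply/pairedP; exists p => //; apply/extendP; left.
  have [aD|aD] := boolP (a \in D); last by right; apply: alone; rewrite !inE aD.
  left; apply/pairedP; exists (link a (f (exist _ a aD))); last by rewrite !inE eqxx.
  by apply/extendP; right; exists (exist _ a aD).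
- apply/setP => p; rewrite inE; apply/andP/idP => [[]|pB].
    by case/extendP => [//|[x ->]] /forall_inP/(_ (inr (f x))); rewrite !inE eqxx orbT => /(_ isT).
  by split; [apply/extendP; left | apply/forall_inP => x; apply: bb_infected].
Qed.

Lemma extend_of_reachable W : reachable I W -> bb_pairings W = B ->
  (forall a, a \in free_infected -> (ib a \in paired W) = (a \in D)) ->
  exists2 f : {ffun dom -> 'I_S}, injective f & W = extend f.
Proof.
move=> reachW bbW pairedE; have [_ disjW _] := reachW.
have bbW' p : p \in B -> p \in W by rewrite -bbW inE => /andP[].
have partner (x : dom) : exists s, link (val x) s \in W.
  have xD : val x \in D := valP x.
  have xF := subsetP D_free _ xD.
  have xW : ib (val x) \in paired W by rewrite pairedE.
  exact: free_paired_link reachW bbW xF xW.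
pose f := [ffun x => xchoose (partner x)].
have fW x : link (val x) (f x) \in W by rewrite ffunE; exact: (xchooseP (partner x)).
exists f => [x x' e|].
  by apply: val_inj; case: (links_disjoint disjW (fW x) (fW x') (or_intror e)).
apply/setP => p; apply/idP/extendP => [pW|[/bbW' //|[x ->]] //].
case: (pair_bb_or_link reachW bbW pW) => [|[a [s pE]]]; first by left.
rewrite pE in pW; have aF := link_free reachW bbW pW.
have aD : a \in D by rewrite -pairedE //; apply/pairedP; exists (link a s); rewrite ?inE ?eqxx.
right; exists (exist _ a aD); rewrite pE.
by case: (links_disjoint disjW pW (fW (exist _ a aD)) (or_introl erefl)) => _ ->.
Qed.

Lemma card_possible_extend :
  (forall W, reachable I W -> bb_pairings W = B ->
     forall a, a \in free_infected -> (ib a \in paired W) = (a \in D)) ->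
  (forall f : {ffun dom -> 'I_S}, injective f ->
     forall a, a \in free_infected :\: D -> left_alone (extend f) a) ->
  #|[set W : wir | possible W && (bb_pairings W == B)]| = S ^_ #|D|.
Proof.
move=> pairedE alone.
have -> : [set W : wir | possible W && (bb_pairings W == B)] =
          extend @: [set f : {ffun dom -> 'I_S} | injectiveb f].
  apply/setP => W; rewrite inE; apply/andP/imsetP => [[/possible_reachable reachW /eqP bbW] | [f]].
    have [f f_inj ->] := extend_of_reachable reachW bbW (pairedE W reachW bbW).
    by exists f => //; rewrite inE; apply/injectiveP.
  rewrite inE => /injectiveP f_inj ->.
  have [reachW ->] := reachable_extend f_inj (alone f f_inj).
  by split; [apply/possible_reachable | ].
by rewrite card_imset; [rewrite card_inj_ffuns card_ord card_sig | exact: extend_inj].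
Qed.

End Extension.

Lemma unpaired_free_max W a a' : reachable I W -> bb_pairings W = B ->
  a \in free_infected -> ib a \notin paired W ->
  a' \in free_infected -> a' != a -> a' < a.
Proof.
move=> reachW bbW aF aW a'F a'a; have [_ _ actW] := reachW.
case: (actW a (ltn_ord a)) => [aW'|[all_paired earlier]]; first by rewrite aW' in aW.
have a'W : ib a' \in paired W by apply: all_paired; apply: contra a'a => /eqP[->].
have [s sW] := free_paired_link reachW bbW a'F a'W.
by have [c ca] := earlier _ sW; move/set2P => [[<-]|].
Qed.

Lemma unpaired_free_unique W W' a a' :
  reachable I W -> bb_pairings W = B -> reachable I W' -> bb_pairings W' = B ->
  a \in free_infected -> ib a \notin paired W ->
  a' \in free_infected -> ib a' \notin paired W' -> a = a'.
Proof.
move=> reachW bbW reachW' bbW' aF aW a'F a'W'; apply/eqP; apply: contraT => aa'.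
have lt_aa' := unpaired_free_max reachW' bbW' a'F a'W' aF aa'.
rewrite eq_sym in aa'; have lt_a'a := unpaired_free_max reachW bbW aF aW a'F aa'.
by have := ltn_trans lt_aa' lt_a'a; rewrite ltnn.
Qed.

Lemma card_free_le_clean W : reachable I W -> bb_pairings W = B ->
  (forall a, a \in free_infected -> ib a \in paired W) -> #|free_infected| <= S.
Proof.
move=> reachW bbW allP; have [_ disjW _] := reachW.
have partner (x : {a | a \in free_infected}) : exists s, link (val x) s \in W.
  exact: free_paired_link reachW bbW (valP x) (allP _ (valP x)).
pose g x := xchoose (partner x).
have g_inj : injective g.
  move=> x x' e; apply: val_inj.
  by case: (links_disjoint disjW (xchooseP (partner x)) (xchooseP (partner x')) (or_intror e)).
by have := leq_card g g_inj; rewrite card_sig card_ord.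
Qed.

Lemma clean_lt_card_free W a : reachable I W -> bb_pairings W = B ->
  a \in free_infected -> ib a \notin paired W -> S < #|free_infected|.
Proof.
move=> reachW bbW aF aW; have [_ disjW actW] := reachW.
case: (actW a (ltn_ord a)) => [aW'|[all_paired _]]; first by rewrite aW' in aW.
have partner s : exists a', link a' s \in W.
  have /pairedP[p pW sp] := all_paired (inr s) isT.
  case: (pair_bb_or_link reachW bbW pW) => [pB|[a' [s' pE]]]; first by have := bb_infected pB sp.
  by exists a'; move: sp; rewrite pE => /set2P[//|[sE]]; rewrite sE -pE.
pose g s := xchoose (partner s).
have gW s : link (g s) s \in W := xchooseP (partner s).
have g_inj : injective g.
  by move=> s s' e; case: (links_disjoint disjW (gW s) (gW s') (or_introl e)).
have : #|g @: [set: 'I_S]| <= #|free_infected :\ a|.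
  apply/subset_leq_card/subsetP => _ /imsetP[s _ ->].
  rewrite in_setD1 (link_free reachW bbW (gW s)) andbT.
  by apply: contraNneq aW => <-; apply/pairedP; exists (link (g s) s); rewrite ?inE ?eqxx.
by rewrite card_imset // cardsT card_ord (cardsD1 a free_infected) aF add1n ltnS.
Qed.

Lemma exists_unpaired_free W : reachable I W -> bb_pairings W = B ->
  S < #|free_infected| -> exists2 a, a \in free_infected & ib a \notin paired W.
Proof.
move=> reachW bbW; case: (boolP [forall a in free_infected, ib a \in paired W]).
  by move/forall_inP/(card_free_le_clean reachW bbW); rewrite ltnNge => ->.
by case/forall_inPn => a aF aW; exists a.
Qed.

Lemma card_possible_all_linked : #|free_infected| <= S ->
  #|[set W : wir | possible W && (bb_pairings W == B)]| = S ^_ #|free_infected|.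
Proof.
move=> freeS; apply: (card_possible_extend (subxx free_infected)) => [W reachW bbW a aF | f _ a].
  rewrite aF; apply: contraTT freeS => aW; rewrite -ltnNge.
  exact: clean_lt_card_free reachW bbW aF aW.
by rewrite setDv inE.
Qed.

Lemma left_alone_extend a0 (f : {ffun {a | a \in free_infected :\ a0} -> 'I_S}) :
  a0 \in free_infected -> ib a0 \notin paired W0 -> #|free_infected| = S.+1 ->
  injective f -> left_alone (extend f) a0.
Proof.
move=> a0F a0W0 freeS f_inj; have [_ _ actW0] := reachW0.
have [_ earlier] : left_alone W0 a0.
  by case: (actW0 a0 (ltn_ord a0)) => // a0W; rewrite a0W in a0W0.
have card_dom : #|{: {a | a \in free_infected :\ a0}}| = S.
  by rewrite card_sig; move: freeS; rewrite (cardsD1 a0) a0F => -[].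
split=> [y ya0 | p /extendP[pB | [x ->]]].
- apply/pairedP; case: y ya0 => [a|s] aa0.
    have [aB|aF] := boolP (ib a \in cover B).
      by case/bigcupP: aB => p pB ap; exists p => //; apply/extendP; left.
    have aD : a \in free_infected :\ a0.
      by rewrite !inE aF andbT; apply: contra aa0 => /eqP->.
    exists (link a (f (exist _ a aD))); last by rewrite !inE eqxx.
    by apply/extendP; right; exists (exist _ a aD).
  have S_le_dom : #|'I_S| <= #|{: {a | a \in free_infected :\ a0}}|.
    by rewrite card_ord card_dom.
  have /codomP[x ->] := inj_card_onto f_inj S_le_dom s.
  exists (link (val x) (f x)); last by rewrite !inE eqxx orbT.
  by apply/extendP; right; exists x.
- exact: earlier _ (subsetP bb_sub p pB).
- exists (val x); last by rewrite !inE eqxx.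
  have := valP x; rewrite in_setD1 => /andP[xa0 xF].
  exact: unpaired_free_max reachW0 bbW0 a0F a0W0 xF xa0.
Qed.

Lemma card_possible_one_alone : #|free_infected| = S.+1 ->
  #|[set W : wir | possible W && (bb_pairings W == B)]| = S`!.
Proof.
move=> freeS; have freeS' : S < #|free_infected| by rewrite freeS.
have [a0 a0F a0W0] := exists_unpaired_free reachW0 bbW0 freeS'.
have a0_alone W a : reachable I W -> bb_pairings W = B -> a \in free_infected ->
    ib a \notin paired W -> a = a0.
  by move=> reachW bbW aF aW; apply: unpaired_free_unique reachW bbW reachW0 bbW0 aF aW a0F a0W0.
rewrite (card_possible_extend (subsetDl free_infected [set a0])) => [|W reachW bbW a aF|f f_inj a].
- have card_D : #|free_infected :\ a0| = S.
    by move: freeS; rewrite (cardsD1 a0 free_infected) a0F => -[].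
  by rewrite (_ : #|_| = S) ?ffactnn //; exact: card_D.
- have [a' a'F a'W] := exists_unpaired_free reachW bbW freeS'.
  rewrite in_setD1 aF andbT; apply/idP/idP => [aW | aa0].
    by apply: contraTneq aW => ->; rewrite -(a0_alone W a' reachW bbW a'F a'W).
  by apply: contraNT aa0 => aW; rewrite (a0_alone W a reachW bbW aF aW).
- move=> /setDP[aF]; rewrite in_setD1 aF andbT negbK => /eqP->.
  exact: left_alone_extend.
Qed.

End Counting.

End Pairing.

Lemma infected_left_bound I S j : L I S <= j <= I %/ 2 ->
  if dagger I S j then I - 2 * j = S.+1 else I - 2 * j <= S.
Proof.
rewrite /L /dagger => /andP[jL jI].
have e1 := modn2 (I - S); have e2 := modn2 (I + S).
case: (odd (I - S)) e1 jL => e1; case: (odd (I + S)) e2 => e2 /=;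
case: (leqP I S) => IS /= jL; try lia; case: eqP => /= ?; lia.
Qed.

Theorem lemma6 (I S j : nat) (B : wiring I S) :
  L I S <= j <= I %/ 2 ->
  #|B| = j ->
  (exists W : wiring I S, possible W /\ bb_pairings W = B) ->
  #|[set W : wiring I S | possible W && (bb_pairings W == B)]| =
    (if dagger I S j then S`! else S`! %/ (S - (I - 2 * j))`!).
Proof.
move=> jbound cardB [W0 [/possible_reachable reachW0 bbW0]].
have card_free := card_free_infected reachW0 bbW0; rewrite cardB in card_free.
move: (infected_left_bound jbound); rewrite -card_free.
case: (dagger I S j) => [card_freeE | free_le].
  exact: card_possible_one_alone reachW0 bbW0 card_freeE.
by rewrite (card_possible_all_linked reachW0 bbW0) // ffact_factd.
Qed.
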